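(* Suppose Assumption A2 holds. Then for any $\boldsymbol{\alpha}\in\mathcal{A}$, $\Phi(\cdot\,;\boldsymbol{\alpha})$ is $\mu_\Phi$-strongly concave on $\mathcal{X}$, where $\mu_\Phi:=\frac{\epsilon+\mu M_{\min}}{2}$ and $M_{\min}=\min_{r=1,\dots,n} M_r$, with $M_r$ the number of links that user $r$ exclusively occupies (links in $\mathcal{L}_r$ used by no other user).
   Context: Network: $n$ users, a finite set of links $\mathcal{L}$; user $r$ uses the set of links $\mathcal{L}_r\subseteq\mathcal{L}$. For each user $r$, a true utility $\widetilde U_r:\mathbb{R}_{>0}\to\mathbb{R}$ and a surrogate utility $U_r(x;\alpha_r)$ ($x>0$, $\alpha_r\in\mathbb{R}$), twice continuously differentiable. Each link $l$ has a twice continuously differentiable $B_l:\mathbb{R}\to\mathbb{R}$. Fix $\epsilon>0$; $\mathcal{A}=\mathcal{A}_1\times\dots\times\mathcal{A}_n$, each $\mathcal{A}_r\subset\mathbb{R}$ closed, convex, bounded. Define $\Phi(\mathbf{x};\boldsymbol{\alpha}) = \sum_{r=1}^n (U_r(x_r;\alpha_r) -\frac{\epsilon x_r^2}{2})-\sum_{l\in\mathcal{L}}B_l(\sum_{i:l\in\mathcal{L}_i}x_i)$. Given constants $0<\delta<b$, let $\mathcal{X}=\{\mathbf{x}:\delta/2<x_r<2b,\ r=1,\dots,n\}$. Assumption A2: for all $\boldsymbol{\alpha}\in\mathcal{A}$, $\mathbf{x}\in\mathcal{X}$: $U_r(\cdot;\alpha_r)$ is concave and each $B_l$ is $\mu$-strongly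 convex; $\widetilde U_r$, $\nabla\widetilde U_r$, $\nabla_xU_r$, $\nabla_\alpha\nabla_xU_r$, $\nabla_x^2U_r$ are $L_u$-Lipschitz; $\nabla B_l$ and $\nabla^2 B_l$ are $L_b$-Lipschitz. *)

From Stdlib Require Import Reals Lra List Bool.
From Coquelicot Require Import Coquelicot.
Import ListNotations.
Open Scope R_scope.
Open Scope bool_scope.

Fixpoint sumR (k : nat) (f : nat -> R) : R :=
  match k with
  | O => 0
  | S k' => sumR k' f + f k'
  end.

Definition convex_set (S : R -> Prop) : Prop :=
  forall y z t, S y -> S z -> 0 <= t <= 1 -> S (t * y + (1 - t) * z).

Definition bounded_set (S : R -> Prop) : Prop :=
  exists M, forall y, S y -> Rabs y <= M.

Definition concave_on (S : R -> Prop) (f : R -> R) : Prop :=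
  forall y z t, S y -> S z -> 0 <= t <= 1 ->
    t * f y + (1 - t) * f z <= f (t * y + (1 - t) * z).

Definition strongly_convex_on (mu : R) (S : R -> Prop) (f : R -> R) : Prop :=
  forall y z t, S y -> S z -> 0 <= t <= 1 ->
    f (t * y + (1 - t) * z)
      <= t * f y + (1 - t) * f z - mu / 2 * t * (1 - t) * (y - z) ^ 2.

Definition lipschitz_on (L : R) (S : R -> Prop) (f : R -> R) : Prop :=
  forall y z, S y -> S z -> Rabs (f y - f z) <= L * Rabs (y - z).

Definition C2_on (D : R -> Prop) (f : R -> R) : Prop :=
  forall y, D y ->
    ex_derive f y /\ ex_derive (Derive f) y /\
    continuous f y /\ continuous (Derive f) y /\ continuous (Derive_n f 2) y.

Definition dx (f : R -> R -> R) : R -> R -> R := fun x a => Derive (fun y => f y a) x.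
Definition da (f : R -> R -> R) : R -> R -> R := fun x a => Derive (fun b => f x b) a.
Definition jcont (g : R -> R -> R) (x a : R) : Prop :=
  continuous (fun p : R * R => g (fst p) (snd p)) (x, a).

Definition C2_xa_on (D : R -> Prop) (f : R -> R -> R) : Prop :=
  forall x a, D x ->
    ex_derive (fun y => f y a) x /\ ex_derive (fun b => f x b) a /\
    ex_derive (fun y => dx f y a) x /\ ex_derive (fun b => dx f x b) a /\
    ex_derive (fun y => da f y a) x /\ ex_derive (fun b => da f x b) a /\
    jcont f x a /\ jcont (dx f) x a /\ jcont (da f) x a /\
    jcont (dx (dx f)) x a /\ jcont (da (dx f)) x a /\
    jcont (dx (da f)) x a /\ jcont (da (da f)) x a.

(* Users are 0..n-1, links are 0..m-1; [uses i l] means link l ∈ L_i. *)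

Definition load (n : nat) (uses : nat -> nat -> bool) (l : nat) (x : nat -> R) : R :=
  sumR n (fun i => if uses i l then x i else 0).

Definition Phi (n m : nat) (uses : nat -> nat -> bool)
  (U : nat -> R -> R -> R) (B : nat -> R -> R) (eps : R)
  (x alpha : nat -> R) : R :=
  sumR n (fun r => U r (x r) (alpha r) - eps * (x r) ^ 2 / 2)
  - sumR m (fun l => B l (load n uses l x)).

Definition inX (n : nat) (delta b : R) (x : nat -> R) : Prop :=
  forall r, (r < n)%nat -> delta / 2 < x r < 2 * b.

Definition Mexcl (n m : nat) (uses : nat -> nat -> bool) (r : nat) : nat :=
  length (filter (fun l => uses r l &&
             forallb (fun i => Nat.eqb i r || negb (uses i l)) (seq 0 n))
          (seq 0 m)).

(* M_min = min_{r=1..n} M_r  (for n = 0 the value is irrelevant) *)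
Definition Mmin (n m : nat) (uses : nat -> nat -> bool) : nat :=
  fold_right (fun r acc => Nat.min (Mexcl n m uses r) acc)
             (Mexcl n m uses 0) (seq 0 n).

Definition sqdist (n : nat) (x y : nat -> R) : R :=
  sumR n (fun r => (x r - y r) ^ 2).

Definition strongly_concave_on_vec (n : nat) (mu : R) (S : (nat -> R) -> Prop)
  (F : (nat -> R) -> R) : Prop :=
  forall x y t, S x -> S y -> 0 <= t <= 1 ->
    t * F x + (1 - t) * F y + mu / 2 * t * (1 - t) * sqdist n x y
      <= F (fun r => t * x r + (1 - t) * y r).

(* Phi splits into the separable utility part and the link-cost part.  Each
   term [U r y a - eps y^2/2] is eps-strongly concave in y, so the utility part
   is eps-strongly concave.  Each [B l] is mu-strongly convex, so the cost part
   loses at least [mu/2 t(1-t) (load_l x - load_l y)^2] per link; a link used by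
   user r alone has [load_l x - load_l y = x_r - y_r], so summing over links
   gives at least [mu/2 t(1-t) M_min |x - y|^2].  Hence Phi is even
   (eps + mu M_min)-strongly concave, which implies the claimed modulus. *)
From Stdlib Require Import Reals Lra List Lia Classical Bool.
From Coquelicot Require Import Coquelicot.
Open Scope R_scope.

Lemma sumR_ext k f g :
  (forall i, (i < k)%nat -> f i = g i) -> sumR k f = sumR k g.
Proof.
  induction k as [|k IH]; simpl; intros Hfg; [reflexivity|].
  rewrite IH, Hfg; [reflexivity | lia | intros; apply Hfg; lia].
Qed.

Lemma sumR_le k f g :
  (forall i, (i < k)%nat -> f i <= g i) -> sumR k f <= sumR k g.
Proof.
  induction k as [|k IH]; simpl; intros Hfg; [lra|].
  apply Rplus_le_compat; [apply IH; intros; apply Hfg; lia | apply Hfg; lia].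
Qed.

Lemma sumR_add k f g : sumR k (fun i => f i + g i) = sumR k f + sumR k g.
Proof. induction k as [|k IH]; simpl; [ring|]. rewrite IH. ring. Qed.

Lemma sumR_scal k c f : sumR k (fun i => c * f i) = c * sumR k f.
Proof. induction k as [|k IH]; simpl; [ring|]. rewrite IH. ring. Qed.

Lemma sumR_opp k f : sumR k (fun i => - f i) = - sumR k f.
Proof. induction k as [|k IH]; simpl; [ring|]. rewrite IH. ring. Qed.

Lemma sumR_eq0 k f : (forall i, (i < k)%nat -> f i = 0) -> sumR k f = 0.
Proof.
  intros Hf. rewrite (sumR_ext k f (fun i => 0 * 0)) by (intros; rewrite Hf; [ring | lia]).
  rewrite sumR_scal. ring.
Qed.

Lemma sumR_ge0 k f : (forall i, (i < k)%nat -> 0 <= f i) -> 0 <= sumR k f.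
Proof. intros Hf. rewrite <- (sumR_eq0 k (fun _ => 0)) by auto. now apply sumR_le. Qed.

Lemma sumR_single k f i0 :
  (i0 < k)%nat -> (forall i, (i < k)%nat -> i <> i0 -> f i = 0) -> sumR k f = f i0.
Proof.
  induction k as [|k IH]; simpl; intros Hi0 Hf; [lia|].
  destruct (Nat.eq_dec i0 k) as [->|Hne].
  - rewrite sumR_eq0 by (intros; apply Hf; lia). ring.
  - rewrite IH, (Hf k) by (try intros; try apply Hf; lia). ring.
Qed.

Lemma sumR_swap m n (f : nat -> nat -> R) :
  sumR m (fun l => sumR n (fun r => f r l)) = sumR n (fun r => sumR m (fun l => f r l)).
Proof.
  induction m as [|m IH]; simpl.
  - symmetry. now apply sumR_eq0.
  - now rewrite IH, sumR_add.
Qed.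

Lemma sumR_indicator m (p : nat -> bool) c :
  sumR m (fun l => if p l then c else 0) = c * INR (length (filter p (seq 0 m))).
Proof.
  induction m as [|m IH]; [simpl; ring|]. cbn [sumR].
  rewrite seq_S, filter_app, length_app, plus_INR, IH.
  simpl. destruct (p m); simpl; ring.
Qed.

Lemma sqdist_ge0 n x y : 0 <= sqdist n x y.
Proof. apply sumR_ge0. intros. apply pow2_ge_0. Qed.

Lemma strongly_concave_on_vec_weaken n mu mu' S F :
  mu' <= mu -> strongly_concave_on_vec n mu S F -> strongly_concave_on_vec n mu' S F.
Proof.
  intros Hmu HF x y t Hx Hy Ht. specialize (HF x y t Hx Hy Ht).
  assert (0 <= t * (1 - t) * sqdist n x y)
    by (apply Rmult_le_pos; [nra | apply sqdist_ge0]).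
  nra.
Qed.

Lemma strongly_concave_on_vec_add n mu1 mu2 S F G :
  strongly_concave_on_vec n mu1 S F -> strongly_concave_on_vec n mu2 S G ->
  strongly_concave_on_vec n (mu1 + mu2) S (fun x => F x + G x).
Proof.
  intros HF HG x y t Hx Hy Ht.
  specialize (HF x y t Hx Hy Ht). specialize (HG x y t Hx Hy Ht). nra.
Qed.

Lemma concave_sub_sqr_strongly_convex_opp eps S f :
  concave_on S f -> strongly_convex_on eps S (fun y => - (f y - eps * y ^ 2 / 2)).
Proof.
  intros Hf y z t Hy Hz Ht. specialize (Hf y z t Hy Hz Ht). nra.
Qed.

Lemma strongly_concave_on_vec_separable n mu (I : R -> Prop) (g : nat -> R -> R) :
  (forall r, (r < n)%nat -> strongly_convex_on mu I (fun y => - g r y)) ->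
  strongly_concave_on_vec n mu (fun x => forall r, (r < n)%nat -> I (x r))
    (fun x => sumR n (fun r => g r (x r))).
Proof.
  intros Hg x y t Hx Hy Ht. unfold sqdist.
  rewrite <- !sumR_scal, <- !sumR_add.
  apply sumR_le. intros r Hr.
  specialize (Hg r Hr (x r) (y r) t (Hx r Hr) (Hy r Hr) Ht). simpl in Hg. lra.
Qed.

Definition exclusive n (uses : nat -> nat -> bool) r l : bool :=
  uses r l && forallb (fun i => Nat.eqb i r || negb (uses i l)) (seq 0 n).

Lemma Mexcl_exclusive n m uses r :
  Mexcl n m uses r = length (filter (exclusive n uses r) (seq 0 m)).
Proof. reflexivity. Qed.

Lemma exclusive_others_unused n uses r l i :
  exclusive n uses r l = true -> (i < n)%nat -> i <> r -> uses i l = false.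
Proof.
  unfold exclusive. intros [_ Hall]%andb_prop Hi Hne.
  rewrite forallb_forall in Hall.
  destruct (orb_prop _ _ (Hall i (proj2 (in_seq _ _ _) (conj (Nat.le_0_l _) Hi))))
    as [Heq | Hunused].
  - apply Nat.eqb_eq in Heq. contradiction.
  - now apply negb_true_iff.
Qed.

Lemma Mmin_le n m uses r : (r < n)%nat -> (Mmin n m uses <= Mexcl n m uses r)%nat.
Proof.
  intros Hr. unfold Mmin.
  assert (Hin : In r (seq 0 n)) by (apply in_seq; lia). revert Hin.
  generalize (seq 0 n). intros s. induction s as [|r' s IH]; simpl; [tauto|].
  intros [->|Hin]; [lia|]. specialize (IH Hin). lia.
Qed.

Lemma load_convex_comb n uses l x y t :
  load n uses l (fun r => t * x r + (1 - t) * y r) =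
  t * load n uses l x + (1 - t) * load n uses l y.
Proof.
  unfold load. rewrite <- !sumR_scal, <- sumR_add.
  apply sumR_ext. intros. destruct (uses i l); ring.
Qed.

Lemma load_sub n uses l x y :
  load n uses l x - load n uses l y = sumR n (fun i => if uses i l then x i - y i else 0).
Proof.
  unfold load, Rminus. rewrite <- sumR_opp, <- sumR_add.
  apply sumR_ext. intros. destruct (uses i l); ring.
Qed.

(* At most one user is exclusive on [l], and then it is the only summand. *)
Lemma sumR_exclusive_sqr_le n uses l (d : nat -> R) :
  sumR n (fun r => if exclusive n uses r l then d r ^ 2 else 0) <=
  (sumR n (fun i => if uses i l then d i else 0)) ^ 2.
Proof.
  destruct (classic (exists r0, (r0 < n)%nat /\ exclusive n uses r0 l = true))
    as [[r0 [Hr0 Hexcl]] | Hnone].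
  - assert (Hothers : forall i, (i < n)%nat -> i <> r0 -> uses i l = false)
      by (intros; eapply exclusive_others_unused; eauto).
    rewrite !(sumR_single _ _ r0 Hr0).
    + rewrite Hexcl. replace (uses r0 l) with true by now apply andb_prop in Hexcl.
      lra.
    + intros i Hi Hne. now rewrite Hothers.
    + intros i Hi Hne. unfold exclusive. now rewrite Hothers.
  - rewrite sumR_eq0; [apply pow2_ge_0|].
    intros i Hi. destruct (exclusive n uses i l) eqn:E; [|reflexivity].
    exfalso. eauto.
Qed.

Lemma Mmin_sqdist_le_sumR_sqr_load n m uses x y :
  INR (Mmin n m uses) * sqdist n x y <=
  sumR m (fun l => (load n uses l x - load n uses l y) ^ 2).
Proof.
  apply Rle_trans with
    (sumR m (fun l => sumR n (fun r => if exclusive n uses r l then (x r - y r) ^ 2 else 0))).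
  - rewrite sumR_swap. unfold sqdist. rewrite <- sumR_scal.
    apply sumR_le. intros r Hr.
    rewrite sumR_indicator, <- Mexcl_exclusive, Rmult_comm.
    apply Rmult_le_compat_l; [apply pow2_ge_0|].
    now apply le_INR, Mmin_le.
  - apply sumR_le. intros l Hl. rewrite load_sub. apply sumR_exclusive_sqr_le.
Qed.

Lemma link_cost_strongly_concave n m uses (B : nat -> R -> R) mu S :
  0 <= mu ->
  (forall l, (l < m)%nat ->
     strongly_convex_on mu (fun s => exists x, S x /\ s = load n uses l x) (B l)) ->
  strongly_concave_on_vec n (mu * INR (Mmin n m uses)) S
    (fun x => - sumR m (fun l => B l (load n uses l x))).
Proof.
  intros Hmu HB x y t Hx Hy Ht.
  assert (Hlinks :
    sumR m (fun l => B l (load n uses l (fun r => t * x r + (1 - t) * y r))) <=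
    sumR m (fun l => t * B l (load n uses l x) + (1 - t) * B l (load n uses l y)
                     + - (mu / 2 * t * (1 - t)) * (load n uses l x - load n uses l y) ^ 2)).
  { apply sumR_le. intros l Hl. rewrite load_convex_comb.
    pose proof (HB l Hl _ _ t (ex_intro _ x (conj Hx eq_refl))
                  (ex_intro _ y (conj Hy eq_refl)) Ht).
    lra. }
  rewrite !sumR_add, !sumR_scal in Hlinks.
  pose proof (Mmin_sqdist_le_sumR_sqr_load n m uses x y).
  assert (0 <= mu / 2 * t * (1 - t)) by (apply Rmult_le_pos; nra).
  nra.
Qed.

Theorem proposition2
  (n m : nat) (uses : nat -> nat -> bool)
  (Ut : nat -> R -> R) (U : nat -> R -> R -> R) (B : nat -> R -> R)
  (eps mu Lu Lb delta b : R) (A : nat -> R -> Prop)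
  (Heps : 0 < eps) (Hmu : 0 < mu) (Hdelta : 0 < delta) (Hdb : delta < b)
  (* regularity (standing assumptions) *)
  (HUt_C2 : forall r, (r < n)%nat -> C2_on (fun y => 0 < y) (Ut r))
  (HU_C2 : forall r, (r < n)%nat -> C2_xa_on (fun y => 0 < y) (U r))
  (HB_C2 : forall l, (l < m)%nat -> C2_on (fun _ => True) (B l))
  (* the parameter sets A_r: closed, convex, bounded *)
  (HA : forall r, (r < n)%nat ->
          closed (A r) /\ convex_set (A r) /\ bounded_set (A r))
  (* Assumption A2 *)
  (HA2_Uconc : forall r ar, (r < n)%nat -> A r ar ->
       concave_on (fun y => delta / 2 < y < 2 * b) (fun y => U r y ar))
  (HA2_Bsc : forall l, (l < m)%nat ->
       strongly_convex_on mu
         (fun s => exists x, inX n delta b x /\ s = load n uses l x) (B l))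
  (HA2_Ut : forall r, (r < n)%nat ->
       lipschitz_on Lu (fun y => delta / 2 < y < 2 * b) (Ut r) /\
       lipschitz_on Lu (fun y => delta / 2 < y < 2 * b) (Derive (Ut r)))
  (HA2_U : forall r ar, (r < n)%nat -> A r ar ->
       lipschitz_on Lu (fun y => delta / 2 < y < 2 * b) (fun y => dx (U r) y ar) /\
       lipschitz_on Lu (fun y => delta / 2 < y < 2 * b) (fun y => da (dx (U r)) y ar) /\
       lipschitz_on Lu (fun y => delta / 2 < y < 2 * b) (fun y => dx (dx (U r)) y ar))
  (HA2_B : forall l, (l < m)%nat ->
       lipschitz_on Lb (fun s => exists x, inX n delta b x /\ s = load n uses l x)
         (Derive (B l)) /\
       lipschitz_on Lb (fun s => exists x, inX n delta b x /\ s = load n uses l x)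
         (Derive_n (B l) 2)) :
  forall alpha : nat -> R, (forall r, (r < n)%nat -> A r (alpha r)) ->
    strongly_concave_on_vec n ((eps + mu * INR (Mmin n m uses)) / 2)
      (inX n delta b) (fun x => Phi n m uses U B eps x alpha).
Proof.
  intros alpha Halpha.
  assert (HM : 0 <= mu * INR (Mmin n m uses)) by (apply Rmult_le_pos; [lra | apply pos_INR]).
  apply strongly_concave_on_vec_weaken with (eps + mu * INR (Mmin n m uses)); [lra|].
  apply strongly_concave_on_vec_add.
  - apply (strongly_concave_on_vec_separable n eps (fun y => delta / 2 < y < 2 * b)
             (fun r y => U r y (alpha r) - eps * y ^ 2 / 2)).
    intros r Hr. apply concave_sub_sqr_strongly_convex_opp, HA2_Uconc; auto.
  - apply link_cost_strongly_concave; [lra | exact HA2_Bsc].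
Qed.
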